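(* Let $k\ge0$ be an integer. For every $\mathbf{n}=(n_1,\dots,n_d)\in\mathbb{Z}^d$ with $\sum_i n_i=0$ and $\sum_i|n_i|=2t$ for some integer $0\le t\le k$, the function $U\mapsto\sum_{\sigma\in S_d}\exp\!\big(i\sum_{j=1}^d n_{\sigma(j)}\varphi_j\big)$, where $e^{i\varphi_1},\dots,e^{i\varphi_d}$ are the eigenvalues of $U\in\mathrm{U}(d)$, belongs to $\mathcal{H}_k$.
   Context: $\mathcal{H}_k$ is the linear span of the functions $U\mapsto\mathrm{tr}(A\,U^{\otimes s}\otimes\bar U^{\otimes s})$ on $\mathrm{U}(d)$, where $0\le s\le k$ and $A$ is an operator on $(\mathbb{C}^d)^{\otimes 2s}$. $S_d$ is the symmetric group (the function is well-defined since it is symmetric in the eigenphases). *)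

From HB Require Import structures.
From mathcomp Require Import all_boot all_order all_algebra all_fingroup.
Set Implicit Arguments. Unset Strict Implicit. Unset Printing Implicit Defensive.
Import Order.TTheory GRing.Theory Num.Theory.
Local Open Scope ring_scope.

(* C : numClosedFieldType (e.g. the complex numbers); x^* is complex conjugation. *)

Definition unitary (C : numClosedFieldType) (d : nat) (U : 'M[C]_d) : Prop :=
  U *m (map_mx Num.conj U)^T = 1%:M.

Definition eigen_list (C : numClosedFieldType) (d : nat) (U : 'M[C]_d)
  (lam : 'I_d -> C) : Prop :=
  char_poly U = \prod_(j < d) ('X - (lam j)%:P).

(* sum_{sigma in S_d} exp(i sum_j n_{sigma j} phi_j), with lam_j = e^{i phi_j} *)
Definition sym_exp (C : numClosedFieldType) (d : nat) (n : 'I_d -> int)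
  (lam : 'I_d -> C) : C :=
  \sum_(s : 'S_d) \prod_(j < d) (lam j ^ n (s j)).

(* multi-indices for (C^d)^{tensor 2s}: first s factors (U), last s factors (conj U) *)
Definition midx (d s : nat) : finType :=
  ({ffun 'I_s -> 'I_d} * {ffun 'I_s -> 'I_d})%type.

(* tr(A U^{(x)s} (x) conj(U)^{(x)s}) written in coordinates, A an operator on
   (C^d)^{(x)2s} given by its matrix entries A a b *)
Definition trace_tens (C : numClosedFieldType) (d s : nat)
  (A : midx d s -> midx d s -> C) (U : 'M[C]_d) : C :=
  \sum_(a : midx d s) \sum_(b : midx d s)
     A a b * \prod_(l < s) (U (b.1 l) (a.1 l) * Num.conj (U (b.2 l) (a.2 l))).

Definition in_H (C : numClosedFieldType) (d k : nat) (f : 'M[C]_d -> C) : Prop :=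
  exists (m : nat) (ss : 'I_m -> 'I_k.+1)
         (As : forall i : 'I_m, midx d (ss i) -> midx d (ss i) -> C)
         (c : 'I_m -> C),
    forall U : 'M[C]_d, unitary U ->
      f U = \sum_(i < m) c i * trace_tens (As i) U.

From HB Require Import structures.
From mathcomp Require Import all_boot all_order all_algebra all_fingroup zify.
Import Order.TTheory GRing.Theory Num.Theory.
Local Open Scope ring_scope.
Set Implicit Arguments. Unset Strict Implicit. Unset Printing Implicit Defensive.

(* Split n = p - q into positive and negative parts, so that sum p = sum q = t.
   For A_i := U^(p_i) (U^* )^(q_i) consider the mixed discriminant
   D(A_1, ..., A_d) = sum_(s, t in S_d) sgn s sgn t prod_i (A_i)_(s i, t i).
   It is a polynomial of degree t in the entries of U and of degree t in their
   conjugates, hence lies in H_k.  As D(Q B_i P) = det Q det P D(B_i), the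
   unitary diagonalization U = P^-1 diag(lam) P gives, using conj lam = lam^-1,
   D(A) = D(diag(lam^(n_i))) = sum_s prod_i lam_(s i)^(n_i). *)

Section FfunCat.
Variables (T : Type) (m n : nat).

Definition fcat (f : {ffun 'I_m -> T}) (g : {ffun 'I_n -> T}) : {ffun 'I_(m + n) -> T} :=
  [ffun l => match split l with inl i => f i | inr j => g j end].
Definition flsplit (h : {ffun 'I_(m + n) -> T}) : {ffun 'I_m -> T} :=
  [ffun i => h (lshift n i)].
Definition frsplit (h : {ffun 'I_(m + n) -> T}) : {ffun 'I_n -> T} :=
  [ffun j => h (rshift m j)].

Lemma fcat_lshift f g i : fcat f g (lshift n i) = f i.
Proof. by rewrite ffunE (unsplitK (inl _ i)). Qed.

Lemma fcat_rshift f g j : fcat f g (rshift m j) = g j.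
Proof. by rewrite ffunE (unsplitK (inr _ j)). Qed.

Lemma fcatKl f g : flsplit (fcat f g) = f.
Proof. by apply/ffunP => i; rewrite ffunE fcat_lshift. Qed.

Lemma fcatKr f g : frsplit (fcat f g) = g.
Proof. by apply/ffunP => j; rewrite ffunE fcat_rshift. Qed.

Lemma fsplitK h : fcat (flsplit h) (frsplit h) = h.
Proof.
apply/ffunP => l; rewrite !ffunE.
by case: splitP => [i|j] e; rewrite ffunE; congr (h _); apply: val_inj.
Qed.

End FfunCat.

Section MixedDiscriminant.
Variables (R : comPzRingType) (d : nat).
Implicit Types (A V W : 'M[R]_d) (B : 'I_d -> 'M[R]_d).

Definition mixed_discr B : R :=
  \sum_(s : 'S_d) \sum_(t : 'S_d) (-1) ^+ s * (-1) ^+ t * \prod_i B i (s i) (t i).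

Lemma eq_mixed_discr B B' : B =1 B' -> mixed_discr B = mixed_discr B'.
Proof.
move=> eqB; apply: eq_bigr => s _; apply: eq_bigr => t _.
by congr (_ * _); apply: eq_bigr => i _; rewrite eqB.
Qed.

Lemma mixed_discr_det B :
  mixed_discr B = \sum_(t : 'S_d) (-1) ^+ t * \det (\matrix_(a, i) B i a (t i)).
Proof.
rewrite /mixed_discr exchange_big; apply: eq_bigr => t _.
rewrite /determinant big_distrr /= (reindex_inj invg_inj) /=.
apply: eq_bigr => s _; rewrite odd_permV [RHS]mulrCA [RHS]mulrA; congr (_ * _).
rewrite [LHS](reindex_inj (@perm_inj _ s)) /=; apply: eq_bigr => a _.
by rewrite mxE permK.
Qed.

Lemma mixed_discr_tr B : mixed_discr (fun i => (B i)^T) = mixed_discr B.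
Proof.
rewrite /mixed_discr exchange_big; apply: eq_bigr => s _; apply: eq_bigr => t _.
by rewrite [_ ^+ t * _]mulrC; congr (_ * _); apply: eq_bigr => i _; rewrite mxE.
Qed.

Lemma mixed_discr_mull V B : mixed_discr (fun i => V *m B i) = \det V * mixed_discr B.
Proof.
rewrite !mixed_discr_det big_distrr; apply: eq_bigr => t _.
rewrite [RHS]mulrCA -det_mulmx; congr (_ * \det _); apply/matrixP => a i.
by rewrite !mxE; apply: eq_bigr => k _; rewrite mxE.
Qed.

Lemma mixed_discr_mulr B W : mixed_discr (fun i => B i *m W) = mixed_discr B * \det W.
Proof.
rewrite -mixed_discr_tr (@eq_mixed_discr _ (fun i => W^T *m (B i)^T)) => [|i].
  by rewrite mixed_discr_mull mixed_discr_tr det_tr mulrC.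
by rewrite trmx_mul.
Qed.

Lemma mixed_discr_diag (r : 'I_d -> 'rV[R]_d) :
  mixed_discr (fun i => diag_mx (r i)) = \sum_(s : 'S_d) \prod_i r i 0 (s i).
Proof.
apply: eq_bigr => s _; rewrite (bigD1 s) //= [X in _ + X]big1 ?addr0 => [|t ts].
  rewrite -signr_addb addbb expr0 mul1r; apply: eq_bigr => i _.
  by rewrite mxE eqxx mulr1n.
have [i sti] : exists i, s i != t i.
  apply/existsP; apply: contraR ts; rewrite negb_exists => /forallP st.
  by apply/eqP/permP => i; apply/esym/eqP; rewrite -[_ == _]negbK st.
by rewrite (bigD1 i) //= mxE (negbTE sti) mulr0n mul0r mulr0.
Qed.

End MixedDiscriminant.

Section Similarity.
Variables (R : comNzRingType) (d : nat) (Q P : 'M[R]_d).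
Hypotheses (QP : Q *m P = 1%:M) (PQ : P *m Q = 1%:M).
Implicit Types (A B : 'M[R]_d).

Lemma similar_mulmx A B : Q *m A *m P *m (Q *m B *m P) = Q *m (A *m B) *m P.
Proof. by rewrite -!mulmxA (mulmxA P) PQ mul1mx. Qed.

Lemma similar_exp A p : (Q *m A *m P) ^+ p = Q *m A ^+ p *m P.
Proof.
elim: p => [|p IHp]; first by rewrite !expr0 mulmx1 QP.
by rewrite !exprSr -!mulmxE IHp similar_mulmx.
Qed.

Lemma mixed_discr_similar (B : 'I_d -> 'M[R]_d) :
  mixed_discr (fun i => Q *m B i *m P) = mixed_discr B.
Proof.
by rewrite mixed_discr_mulr mixed_discr_mull mulrAC -det_mulmx QP det1 mul1r.
Qed.

Lemma char_poly_similar A : char_poly (Q *m A *m P) = char_poly A.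
Proof.
pose polyC_mx := map_mx (@polyC R) : 'M[R]_d -> 'M[{poly R}]_d.
have polyC_mx1 : polyC_mx Q *m polyC_mx P = 1%:M by rewrite -map_mxM QP map_mx1.
rewrite /char_poly.
have -> : char_poly_mx (Q *m A *m P) = polyC_mx Q *m char_poly_mx A *m polyC_mx P.
  rewrite /char_poly_mx mulmxBr mulmxBl !map_mxM; congr (_ - _).
  by rewrite mul_mx_scalar -scalemxAl polyC_mx1 scalemx1.
by rewrite !det_mulmx mulrAC -det_mulmx polyC_mx1 det1 mul1r.
Qed.

End Similarity.

Lemma diag_mx_exp (R : pzSemiRingType) d (r : 'rV[R]_d) p :
  diag_mx r ^+ p = diag_mx (\row_j r 0 j ^+ p).
Proof.
elim: p => [|p IHp].
  by rewrite expr0; apply/matrixP => i j; rewrite !mxE expr0.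
rewrite exprSr -mulmxE IHp mulmx_diag.
by congr diag_mx; apply/rowP => j; rewrite !mxE exprSr.
Qed.

Lemma char_poly_diag (R : comNzRingType) d (r : 'rV[R]_d) :
  char_poly (diag_mx r) = \prod_j ('X - (r 0 j)%:P).
Proof.
rewrite char_poly_trig ?diag_mx_is_trig //.
by apply: eq_bigr => j _; rewrite mxE eqxx mulr1n.
Qed.

Lemma eq_prod_XsubC_perm (F : fieldType) d (lam mu : 'I_d -> F) :
  \prod_j ('X - (lam j)%:P) = \prod_j ('X - (mu j)%:P) ->
  exists pi : 'S_d, forall j, lam j = mu (pi j).
Proof.
move=> eq_lam_mu.
have /tuple_permP[pi lam_pi] : perm_eq [tuple lam j | j < d] [tuple mu j | j < d].
  by apply: prod_XsubC_eq; rewrite !big_map -!enumT !big_enum.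
exists pi => j.
by have := congr1 (nth (lam j) ^~ j) lam_pi; rewrite -!(tnth_nth (lam j)) !tnth_mktuple.
Qed.

Definition pos_part (z : int) : nat := if z is Posz m then m else 0.
Definition neg_part (z : int) : nat := if z is Negz m then m.+1 else 0.

Lemma int_parts (z : int) : z = (pos_part z)%:Z - (neg_part z)%:Z.
Proof. by case: z => m /=; lia. Qed.

Lemma abs_int_parts (z : int) : `|z| = (pos_part z + neg_part z)%N%:Z.
Proof. by case: z => m /=; rewrite ?addn0 // NegzE normrN. Qed.

Lemma exprz_parts (R : unitRingType) (x : R) (z : int) :
  x ^ z = x ^+ pos_part z * x^-1 ^+ neg_part z.
Proof. by case: z => m /=; rewrite ?expr0 ?mulr1 ?mul1r // exprVn. Qed.

Lemma sum_pos_neg_parts d (n : 'I_d -> int) t :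
  \sum_i n i = 0 -> \sum_i `|n i| = (2 * t)%:Z ->
  (\sum_i pos_part (n i))%N = t /\ (\sum_i neg_part (n i))%N = t.
Proof.
have Posz_sum (F : 'I_d -> nat) : (\sum_i F i)%N%:Z = \sum_i (F i)%:Z.
  exact: (big_morph Posz PoszD).
move=> sum_n sum_abs_n.
have : (\sum_i pos_part (n i))%N%:Z - (\sum_i neg_part (n i))%N%:Z = 0.
  rewrite !Posz_sum -sumrB -[RHS]sum_n; apply: eq_bigr => i _.
  exact/esym/int_parts.
have : (\sum_i pos_part (n i) + \sum_i neg_part (n i))%N%:Z = (2 * t)%:Z.
  rewrite -sum_abs_n -big_split Posz_sum; apply: eq_bigr => i _.
  exact/esym/abs_int_parts.
lia.
Qed.

Section Bihomogeneous.
Variables (C : numClosedFieldType) (d : nat).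
Local Open Scope sesquilinear_scope.
Implicit Types (U : 'M[C]_d) (f g : 'M[C]_d -> C).

Definition bidx (s s' : nat) : finType :=
  ({ffun 'I_s -> 'I_d} * {ffun 'I_s' -> 'I_d})%type.

(* [bimonomial a b U] is the (b, a) coefficient of U^(x)s (x) conj(U)^(x)s',
   indexed as in [trace_tens]. *)
Definition bimonomial s s' (a b : bidx s s') U : C :=
  \prod_(l < s) U (b.1 l) (a.1 l) * \prod_(l < s') (U (b.2 l) (a.2 l))^*.

Definition bihomogeneous s s' f : Prop :=
  exists A : bidx s s' -> bidx s s' -> C,
    forall U,
      f U = \sum_(a : bidx s s') \sum_(b : bidx s s') A a b * bimonomial a b U.

Lemma bihomogeneous_eq s s' f g :
  f =1 g -> bihomogeneous s s' f -> bihomogeneous s s' g.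
Proof. by move=> eq_fg [A fA]; exists A => U; rewrite -eq_fg. Qed.

Lemma bihomogeneous0 s s' : bihomogeneous s s' (fun=> 0).
Proof.
exists (fun _ _ => 0) => U.
by rewrite big1 // => a _; rewrite big1 // => b _; rewrite mul0r.
Qed.

Lemma bihomogeneousD s s' f g : bihomogeneous s s' f -> bihomogeneous s s' g ->
  bihomogeneous s s' (fun U => f U + g U).
Proof.
move=> [A fA] [B gB]; exists (fun a b => A a b + B a b) => U.
rewrite fA gB -big_split; apply: eq_bigr => a _; rewrite -big_split.
by apply: eq_bigr => b _; rewrite mulrDl.
Qed.

Lemma bihomogeneousZ s s' c f :
  bihomogeneous s s' f -> bihomogeneous s s' (fun U => c * f U).
Proof.
move=> [A fA]; exists (fun a b => c * A a b) => U.
rewrite fA mulr_sumr; apply: eq_bigr => a _; rewrite mulr_sumr.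
by apply: eq_bigr => b _; rewrite mulrA.
Qed.

Lemma bihomogeneous_sum (I : Type) (r : seq I) s s' (F : I -> 'M[C]_d -> C) :
  (forall i, bihomogeneous s s' (F i)) ->
  bihomogeneous s s' (fun U => \sum_(i <- r) F i U).
Proof.
move=> homF; elim: r => [|i r IHr].
  by apply: bihomogeneous_eq (bihomogeneous0 s s') => U; rewrite big_nil.
by apply: bihomogeneous_eq (bihomogeneousD (homF i) IHr) => U; rewrite big_cons.
Qed.

Lemma bihomogeneous_bimonomial s s' (a b : bidx s s') :
  bihomogeneous s s' (bimonomial a b).
Proof.
exists (fun a' b' => ((a', b') == (a, b))%:R) => U; rewrite pair_big /=.
rewrite (bigD1 (a, b)) //= eqxx mul1r big1 ?addr0 // => -[a' b'] /negbTE->.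
by rewrite mul0r.
Qed.

Let ffun_I0 : {ffun 'I_0 -> 'I_d} := ffun0 (card_ord 0).

Lemma bihomogeneous_const c : bihomogeneous 0 0 (fun=> c).
Proof.
apply: bihomogeneous_eq (bihomogeneousZ c
  (bihomogeneous_bimonomial (ffun_I0, ffun_I0) (ffun_I0, ffun_I0))) => U.
by rewrite /bimonomial !big_ord0 !mulr1.
Qed.

Lemma bihomogeneous_entry i j : bihomogeneous 1 0 (fun U => U i j).
Proof.
apply: bihomogeneous_eq
  (bihomogeneous_bimonomial ([ffun=> j], ffun_I0) ([ffun=> i], ffun_I0)) => U.
by rewrite /bimonomial big_ord1 big_ord0 !ffunE mulr1.
Qed.

Lemma bihomogeneous_adj_entry i j : bihomogeneous 0 1 (fun U => U^t* i j).
Proof.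
apply: bihomogeneous_eq
  (bihomogeneous_bimonomial (ffun_I0, [ffun=> i]) (ffun_I0, [ffun=> j])) => U.
by rewrite /bimonomial big_ord1 big_ord0 !ffunE mul1r !mxE.
Qed.

Section Concatenation.
Variables s1 s1' s2 s2' : nat.

Definition bcat (a : bidx s1 s1') (a' : bidx s2 s2') : bidx (s1 + s2) (s1' + s2') :=
  (fcat a.1 a'.1, fcat a.2 a'.2).
Definition blsplit (a : bidx (s1 + s2) (s1' + s2')) : bidx s1 s1' :=
  (flsplit a.1, flsplit a.2).
Definition brsplit (a : bidx (s1 + s2) (s1' + s2')) : bidx s2 s2' :=
  (frsplit a.1, frsplit a.2).

Lemma bcatKl a a' : blsplit (bcat a a') = a.
Proof. by rewrite /blsplit !fcatKl; case: a. Qed.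

Lemma bcatKr a a' : brsplit (bcat a a') = a'.
Proof. by rewrite /brsplit !fcatKr; case: a'. Qed.

Lemma big_bcat (F : bidx (s1 + s2) (s1' + s2') -> C) :
  \sum_(a : bidx (s1 + s2) (s1' + s2')) F a =
  \sum_(a : bidx s1 s1') \sum_(a' : bidx s2 s2') F (bcat a a').
Proof.
rewrite pair_big /= (reindex (fun p => bcat p.1 p.2)) //=.
exists (fun a => (blsplit a, brsplit a)) => [[a a'] _|[h h'] _].
  by rewrite bcatKl bcatKr.
by rewrite /bcat /= !fsplitK.
Qed.

Lemma bimonomial_bcat a a' b b' U :
  bimonomial (bcat a a') (bcat b b') U = bimonomial a b U * bimonomial a' b' U.
Proof.
rewrite /bimonomial !big_split_ord /= [LHS]mulrACA.
by congr (_ * _ * (_ * _)); apply: eq_bigr => l _; rewrite ?fcat_lshift ?fcat_rshift.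
Qed.

End Concatenation.

Lemma bihomogeneousM s1 s1' s2 s2' f g :
  bihomogeneous s1 s1' f -> bihomogeneous s2 s2' g ->
  bihomogeneous (s1 + s2) (s1' + s2') (fun U => f U * g U).
Proof.
move=> [A fA] [B gB].
exists (fun a b => A (blsplit a) (blsplit b) * B (brsplit a) (brsplit b)) => U.
rewrite fA gB big_bcat mulr_suml; apply: eq_bigr => a _.
under [RHS]eq_bigr do rewrite big_bcat.
rewrite [RHS]exchange_big mulr_suml; apply: eq_bigr => b _.
rewrite mulr_sumr; apply: eq_bigr => a' _; rewrite mulr_sumr; apply: eq_bigr => b' _.
by rewrite !(bcatKl, bcatKr) bimonomial_bcat mulrACA.
Qed.

Lemma bihomogeneous_prod (I : Type) (r : seq I) (p q : I -> nat)
    (F : I -> 'M[C]_d -> C) :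
  (forall i, bihomogeneous (p i) (q i) (F i)) ->
  bihomogeneous (\sum_(i <- r) p i) (\sum_(i <- r) q i)
    (fun U => \prod_(i <- r) F i U).
Proof.
move=> homF; elim: r => [|i r IHr].
  rewrite !big_nil.
  by apply: bihomogeneous_eq (bihomogeneous_const 1) => U; rewrite big_nil.
rewrite !big_cons.
by apply: bihomogeneous_eq (bihomogeneousM (homF i) IHr) => U; rewrite big_cons.
Qed.

Lemma bihomogeneous_mulmx s1 s1' s2 s2' (M N : 'M[C]_d -> 'M[C]_d) :
  (forall i j, bihomogeneous s1 s1' (fun U => M U i j)) ->
  (forall i j, bihomogeneous s2 s2' (fun U => N U i j)) ->
  forall i j, bihomogeneous (s1 + s2) (s1' + s2') (fun U => (M U *m N U) i j).
Proof.
move=> homM homN i j; apply: bihomogeneous_eq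
  (bihomogeneous_sum (index_enum _) (fun k => bihomogeneousM (homM i k) (homN k j))).
by move=> U; rewrite mxE.
Qed.

Lemma bihomogeneous_exp s s' (M : 'M[C]_d -> 'M[C]_d) p :
  (forall i j, bihomogeneous s s' (fun U => M U i j)) ->
  forall i j, bihomogeneous (p * s) (p * s') (fun U => (M U ^+ p) i j).
Proof.
move=> homM; elim: p => [|p IHp] i j.
  rewrite !mul0n; apply: bihomogeneous_eq (bihomogeneous_const (i == j)%:R) => U.
  by rewrite expr0 mxE.
rewrite !mulSnr; apply: bihomogeneous_eq (bihomogeneous_mulmx IHp homM i j) => U.
by rewrite exprSr mulmxE.
Qed.

Lemma bihomogeneous_mixed_discr (B : 'M[C]_d -> 'I_d -> 'M[C]_d) (p q : 'I_d -> nat) :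
  (forall i a b, bihomogeneous (p i) (q i) (fun U => B U i a b)) ->
  bihomogeneous (\sum_i p i) (\sum_i q i) (fun U => mixed_discr (B U)).
Proof.
move=> homB; do 2!apply: bihomogeneous_sum => ?.
by apply: bihomogeneousZ; apply: bihomogeneous_prod => i; apply: homB.
Qed.

Lemma bihomogeneous_in_H k s f : (s <= k)%N -> bihomogeneous s s f -> in_H k f.
Proof.
move=> le_sk [A fA]; exists 1%N, (fun=> Ordinal (le_sk : (s < k.+1)%N)), (fun=> A).
exists (fun=> 1) => U _; rewrite big_ord1 mul1r fA /trace_tens.
by apply: eq_bigr => a _; apply: eq_bigr => b _; rewrite big_split.
Qed.

End Bihomogeneous.

Section UnitaryEvaluation.
Variables (C : numClosedFieldType) (d : nat).
Local Open Scope sesquilinear_scope.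
Implicit Types (U : 'M[C]_d) (n : 'I_d -> int).

Lemma unitaryP U : unitary U <-> U \is unitarymx.
Proof. by rewrite /unitary map_trmx; split=> /unitarymxP. Qed.

Lemma unitarymx_diag_conj (r : 'rV[C]_d) j :
  diag_mx r \is unitarymx -> (r 0 j)^* = (r 0 j)^-1.
Proof.
move=> /unitarymxP /matrixP /(_ j j).
by rewrite tr_diag_mx map_diag_mx mulmx_diag !mxE eqxx mulr1n => /mulr1_eq ->.
Qed.

Lemma unitarymx_spectral U : U \is unitarymx ->
  exists (Q P : 'M[C]_d) (r : 'rV[C]_d),
    [/\ Q *m P = 1%:M, P *m Q = 1%:M, U = Q *m diag_mx r *m P
      & U^t* = Q *m diag_mx (\row_j (r 0 j)^-1) *m P].
Proof.
move=> U_unitary.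
have U_normal : U \is normalmx.
  by apply/normalmxP; rewrite (unitarymxP U_unitary) (mulmx1C (unitarymxP U_unitary)).
set P := spectralmx U; set r := spectral_diag U.
have P_unitary : P \is unitarymx := spectral_unitarymx U.
have P_unit := unitarymx_unit P_unitary.
have UE : U = invmx P *m diag_mx r *m P by apply/orthomx_spectralP.
have Q_adj : invmx P = P^t* := invmx_unitary P_unitary.
have r_unitary : diag_mx r \is unitarymx.
  have -> : diag_mx r = P *m U *m invmx P.
    by rewrite UE !mulmxA mulmxV // mul1mx mulmxK.
  by rewrite mul_unitarymx ?mul_unitarymx // Q_adj trmxC_unitary.
exists (invmx P), P, r; split; rewrite ?mulVmx ?mulmxV //.
rewrite {1}UE !trmx_mul !map_mxM mulmxA Q_adj trmxCK.
rewrite tr_diag_mx map_diag_mx; congr (_ *m diag_mx _ *m _); apply/rowP => j.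
by rewrite !mxE; exact: unitarymx_diag_conj.
Qed.

Definition sym_exp_mx n U : C :=
  mixed_discr (fun i => U ^+ pos_part (n i) *m U^t* ^+ neg_part (n i)).

Lemma bihomogeneous_sym_exp_mx n :
  bihomogeneous (\sum_i pos_part (n i)) (\sum_i neg_part (n i)) (sym_exp_mx n).
Proof.
apply: bihomogeneous_mixed_discr => i.
have U_pow := bihomogeneous_exp (pos_part (n i)) (@bihomogeneous_entry C d).
have Ut_pow := bihomogeneous_exp (neg_part (n i)) (@bihomogeneous_adj_entry C d).
by have := bihomogeneous_mulmx U_pow Ut_pow; rewrite !muln1 !muln0 addn0 add0n.
Qed.

Lemma eq_sym_exp_perm n (lam mu : 'I_d -> C) (pi : 'S_d) :
  (forall j, lam j = mu (pi j)) -> sym_exp n lam = sym_exp n mu.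
Proof.
move=> lam_mu; rewrite /sym_exp [RHS](reindex_inj (mulgI pi^-1)%g) /=.
apply: eq_bigr => s _; rewrite [RHS](reindex_inj (@perm_inj _ pi)) /=.
by apply: eq_bigr => j _; rewrite lam_mu permM permK.
Qed.

Lemma mixed_discr_diag_exp n (r : 'rV[C]_d) :
  mixed_discr (fun i => diag_mx (\row_j (r 0 j ^ n i)%R)) = sym_exp n (fun j => r 0 j).
Proof.
rewrite mixed_discr_diag /sym_exp (reindex_inj invg_inj) /=.
apply: eq_bigr => s _; rewrite (reindex_inj (@perm_inj _ s)) /=.
by apply: eq_bigr => j _; rewrite mxE permK.
Qed.

Lemma sym_exp_mx_similar_diag n (Q P : 'M[C]_d) (r : 'rV[C]_d) U :
  Q *m P = 1%:M -> P *m Q = 1%:M -> U = Q *m diag_mx r *m P ->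
  U^t* = Q *m diag_mx (\row_j (r 0 j)^-1) *m P ->
  sym_exp_mx n U = sym_exp n (fun j => r 0 j).
Proof.
move=> QP PQ UE UtE; rewrite -mixed_discr_diag_exp -(mixed_discr_similar QP).
apply: eq_mixed_discr => i; rewrite UtE {1}UE !similar_exp // similar_mulmx //.
rewrite !diag_mx_exp mulmx_diag; congr (_ *m diag_mx _ *m _); apply/rowP => j.
by rewrite !mxE exprz_parts.
Qed.

Lemma sym_exp_mx_unitary n U lam :
  unitary U -> eigen_list U lam -> sym_exp_mx n U = sym_exp n lam.
Proof.
move=> /unitaryP /unitarymx_spectral[Q [P [r [QP PQ UE UtE]]]] charU.
rewrite (sym_exp_mx_similar_diag n QP PQ UE UtE).
have [pi r_lam] : exists pi : 'S_d, forall j, r 0 j = lam (pi j).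
  by apply: eq_prod_XsubC_perm; rewrite -charU UE char_poly_similar // char_poly_diag.
exact: eq_sym_exp_perm r_lam.
Qed.

End UnitaryEvaluation.

Theorem lemma14 (C : numClosedFieldType) (d k t : nat) (n : 'I_d -> int)
  (hsum : \sum_(i < d) n i = 0)
  (habs : \sum_(i < d) `|n i| = (2 * t)%:Z)
  (ht : (t <= k)%N) :
  exists f : 'M[C]_d -> C,
    in_H k f /\
    forall (U : 'M[C]_d) (lam : 'I_d -> C),
      unitary U -> eigen_list U lam -> f U = sym_exp n lam.
Proof.
have [deg_pos deg_neg] := sum_pos_neg_parts hsum habs.
exists (sym_exp_mx n); split; last exact: sym_exp_mx_unitary.
apply: (bihomogeneous_in_H ht).
by have := bihomogeneous_sym_exp_mx C n; rewrite deg_pos deg_neg.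
Qed.
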